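(* Let $m$ be a positive integer, and write $m = 2^{\nu_2(m)} m_1$ with $m_1$ odd. If $m_1 \equiv 1 \pmod 4$, then $S_2(m)$ is empty.
   Context: For a positive integer $x$, $\nu_2(x)$ denotes the largest integer $e$ such that $2^e$ divides $x$. For a positive integer $m$, consider positive rational solutions $(x,y)$ of $x^y = y^{mx}$ with $x \neq 1$. For such a solution, $r = \log y / \log x$ is a positive rational number (so $y = x^r$); write $r = a/b$ with $a,b$ positive coprime integers. For an integer $k \ge 1$, $S_k(m)$ denotes the set of such solutions $(x,y)$ for which $|a-b| = k$. *)

From HB Require Import structures.
From mathcomp Require Import all_boot all_order all_algebra.
From mathcomp Require Import boolp classical_sets reals exp.
Set Implicit Arguments. Unset Strict Implicit. Unset Printing Implicit Defensive.
Import Order.TTheory GRing.Theory Num.Theory.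
Local Open Scope ring_scope.
Local Open Scope classical_set_scope.

Definition is_solution (R : realType) (m : nat) (x y : rat) : Prop :=
  0 < x /\ 0 < y /\ x != 1 /\
  powR (ratr x : R) (ratr y) = powR (ratr y : R) (m%:R * ratr x).

Definition S_set (R : realType) (m k : nat) : set (rat * rat) :=
  [set p | is_solution R m p.1 p.2 /\
    exists a b : nat, [/\ (0 < a)%N, (0 < b)%N, coprime a b,
       ln (ratr p.2 : R) / ln (ratr p.1) = a%:R / b%:R &
       `|(a%:Z - b%:Z)%R|%N = k]].

From HB Require Import structures.
From mathcomp Require Import all_boot all_order all_algebra.
From mathcomp Require Import boolp classical_sets reals exp.
From mathcomp Require Import zify ring.
Set Implicit Arguments. Unset Strict Implicit. Unset Printing Implicit Defensive.
Import Order.TTheory GRing.Theory Num.Theory.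

(* Taking logarithms, a solution with ratio a/b satisfies y = u x with
   u = m a / b, and y^b = x^a.  When |a - b| = 2 the coprime a, b are both
   odd, so u^b is a rational square, hence so are u and m a b, and m a b is
   the square of a natural number.  But with c = min(a, b) the odd part of
   m a b is m1 c (c + 2) = 3 (mod 4), while the odd part of a square is
   1 (mod 4). *)

Lemma odd_sqr_mod4 (s : nat) : odd s -> s ^ 2 %% 4 = 1.
Proof.
move=> odd_s; rewrite -(odd_double_half s) odd_s -muln2; move: s./2 => d /=.
have -> : (1 + d * 2) ^ 2 = (d * d + d) * 4 + 1 by lia.
by rewrite modnMDl.
Qed.

Lemma odd_part_sqr_mod4 (t e w : nat) : odd w -> t ^ 2 = 2 ^ e * w -> w %% 4 = 1.
Proof.
move=> odd_w sq_t.
have : 0 < t ^ 2 by rewrite sq_t muln_gt0 expn_gt0 (odd_gt0 odd_w).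
rewrite expn_gt0 orbF => t_gt0.
have [s odd_s def_t] := pfactor_coprime (isT : prime 2) t_gt0.
rewrite coprime2n in odd_s.
have s_gt0 : 0 < s by rewrite odd_gt0.
set k := logn 2 t in def_t.
have sq_t' : t ^ 2 = 2 ^ (k * 2) * s ^ 2 by rewrite def_t expnMn -expnM mulnC.
have def_e : e = k * 2.
  have := congr1 (logn 2) sq_t.
  rewrite sq_t' !lognM ?expn_gt0 ?s_gt0 ?(odd_gt0 odd_w) // !pfactorK //.
  by rewrite !logn_coprime ?coprime2n // !addn0.
have -> : w = s ^ 2.
  by apply/eqP; rewrite -(eqn_pmul2l (expn_gt0 2 e)) -sq_t def_e sq_t'.
exact: odd_sqr_mod4.
Qed.

Lemma coprime_add2_odd (c : nat) : coprime c (c + 2) -> odd c.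
Proof.
move=> co_c; apply/negPn/negP => even_c.
suff : 2 %| gcdn c (c + 2) by rewrite (eqP co_c).
by rewrite dvdn_gcd dvdn_addr dvdn2 even_c.
Qed.

Lemma coprime_dist2_odd (a b : nat) :
  coprime a b -> a = b + 2 \/ b = a + 2 -> odd a /\ odd b.
Proof.
move=> co_ab [def_a | def_b].
- have odd_b : odd b by apply: coprime_add2_odd; rewrite -def_a coprime_sym.
  by rewrite def_a oddD odd_b.
- have odd_a : odd a by apply: coprime_add2_odd; rewrite -def_b.
  by rewrite def_b oddD odd_a.
Qed.

Lemma mul_add2_mod4 (c : nat) : odd c -> c * (c + 2) %% 4 = 3.
Proof.
move=> odd_c; rewrite -(odd_double_half c) odd_c -muln2; move: c./2 => d /=.
have -> : (1 + d * 2) * (1 + d * 2 + 2) = (d * d + 2 * d) * 4 + 3 by lia.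
by rewrite modnMDl.
Qed.

Local Open Scope ring_scope.

Lemma sqr_of_odd_expr_sqr (F : fieldType) (u v : F) (n : nat) :
  odd n -> u ^+ n = v ^+ 2 -> exists w, u = w ^+ 2.
Proof.
move=> odd_n uv; have [-> | u_neq0] := eqVneq u 0; first by exists 0; rewrite expr0n.
rewrite -(odd_double_half n) odd_n -muln2 in uv; move: n./2 uv => k /= uv.
exists (v / u ^+ k).
by rewrite expr_div_n -uv -exprM exprD expr1 mulfK // expf_neq0.
Qed.

(* The denominator d of w satisfies d^2 | numq(w)^2, which is coprime to d^2. *)
Lemma rat_sqr_natr (w : rat) (N : nat) : w ^+ 2 = N%:R -> exists t, N = (t ^ 2)%N.
Proof.
move=> sq_w; set p := `|numq w|%N; set q := `|denq w|%N.
have sq_num : numq w ^+ 2 = N%:Z * denq w ^+ 2.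
  apply: (@intr_inj rat).
  by rewrite rmorphXn rmorphM /= rmorphXn /= numqE exprMn sq_w.
have sq_pq : (p ^ 2 = N * q ^ 2)%N by rewrite -!abszX sq_num abszM abszX.
have q2_dvd : (q ^ 2 %| p ^ 2)%N by rewrite sq_pq dvdn_mull.
have co_q2p2 : coprime (q ^ 2) (p ^ 2).
  by rewrite coprimeXl // coprimeXr // coprime_sym coprime_num_den.
have q2_eq1 : (q ^ 2 = 1)%N by rewrite -[RHS](eqP co_q2p2); exact/esym/gcdn_idPl.
by exists p; rewrite sq_pq q2_eq1 muln1.
Qed.

Lemma powR_ln_ratio (R : realType) (X Y c r : R) :
  0 < X -> 0 < Y -> X != 1 -> ln Y = r * ln X ->
  X `^ Y = Y `^ (c * X) -> Y = c * r * X.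
Proof.
move=> X_gt0 Y_gt0 X_neq1 lnY.
rewrite /powR (gt_eqF X_gt0) (gt_eqF Y_gt0) => /expR_inj.
have lnX_neq0 : ln X != 0 by rewrite ln_eq0.
by rewrite lnY mulrA => /(mulIf lnX_neq0) ->; ring.
Qed.

Lemma ln_ratio_exprn (R : realType) (X Y : R) (a b : nat) :
  0 < X -> 0 < Y -> (0 < b)%N -> ln Y = a%:R / b%:R * ln X -> Y ^+ b = X ^+ a.
Proof.
move=> X_gt0 Y_gt0 b_gt0 lnY.
have b_neq0 : b%:R != 0 :> R by rewrite pnatr_eq0 -lt0n.
apply: ln_inj; rewrite ?posrE ?exprn_gt0 //.
by rewrite (lnXn _ Y_gt0) (lnXn _ X_gt0) lnY -mulr_natr -(mulr_natr (ln X)); field.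
Qed.

Lemma is_solution_ratio (R : realType) (m a b : nat) (x y : rat) :
  is_solution R m x y -> (0 < b)%N ->
  ln (ratr y : R) / ln (ratr x) = a%:R / b%:R ->
  y = m%:R * (a%:R / b%:R) * x /\ y ^+ b = x ^+ a.
Proof.
move=> [x_gt0 [y_gt0 [x_neq1 powR_xy]]] b_gt0 ratio.
have X_gt0 : 0 < ratr x :> R by rewrite ltr0q.
have Y_gt0 : 0 < ratr y :> R by rewrite ltr0q.
have X_neq1 : ratr x != 1 :> R by rewrite fmorph_eq1.
have lnX_neq0 : ln (ratr x : R) != 0 by rewrite ln_eq0.
have lnY : ln (ratr y : R) = a%:R / b%:R * ln (ratr x) by rewrite -ratio divfK.
split; apply: (fmorph_inj (@ratr R)).
- apply: etrans (powR_ln_ratio X_gt0 Y_gt0 X_neq1 lnY powR_xy) _.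
  by rewrite !rmorphM fmorphV /= !ratr_nat.
- by rewrite !rmorphXn /=; exact: ln_ratio_exprn.
Qed.

(* Both cases reduce to u^b = v^2: v = x if a = b + 2, and v = x^-1 if b = a + 2. *)
Lemma dist2_ratio_sqr (F : fieldType) (u x : F) (a b : nat) :
  odd b -> x != 0 -> (u * x) ^+ b = x ^+ a -> a = (b + 2)%N \/ b = (a + 2)%N ->
  exists w, u = w ^+ 2.
Proof.
move=> odd_b x_neq0 uxb [def_a | def_b].
- apply: (sqr_of_odd_expr_sqr (v := x) odd_b).
  by apply: (mulIf (expf_neq0 b x_neq0)); rewrite -exprMn uxb def_a exprD mulrC.
- apply: (sqr_of_odd_expr_sqr (v := x^-1) odd_b).
  apply: (mulIf (expf_neq0 2 x_neq0)); rewrite -exprMn mulVf // expr1n.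
  apply: (mulIf (expf_neq0 a x_neq0)); rewrite -mulrA -exprD addnC -def_b.
  by rewrite -exprMn uxb mul1r.
Qed.

Local Close Scope ring_scope.
Local Open Scope classical_set_scope.

Theorem lemma5 (R : realType) (m m1 : nat) :
  (0 < m)%N -> odd m1 -> m = (2 ^ logn 2 m * m1)%N -> m1 %% 4 = 1 ->
  S_set R m 2 = set0.
Proof.
move=> _ odd_m1 def_m m1_mod4.
rewrite -subset0 => -[x y] [sol [a [b [_ b_gt0 co_ab ratio dist_ab]]]].
have gap : a = (b + 2)%N \/ b = (a + 2)%N by lia.
have [odd_a odd_b] := coprime_dist2_odd co_ab gap.
have [def_y pow_yx] := is_solution_ratio sol b_gt0 ratio.
have x_neq0 : (x != 0)%R by case: sol => x_gt0 _; rewrite gt_eqF.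
rewrite def_y in pow_yx.
have [w def_u] := dist2_ratio_sqr odd_b x_neq0 pow_yx gap.
have [t sq_mab] : exists t, (m * a * b = t ^ 2)%N.
  have b_neq0 : (b%:R != 0 :> rat)%R by rewrite pnatr_eq0 -lt0n.
  apply: (@rat_sqr_natr (w * b%:R)%R).
  by rewrite exprMn -def_u !natrM; field.
set c := minn a b.
have odd_c : odd c by rewrite /c /minn; case: ifP.
have : (m1 * (c * (c + 2))) %% 4 = 1.
  apply: (odd_part_sqr_mod4 (t := t) (e := logn 2 m)).
    by rewrite !oddM odd_m1 odd_c oddD odd_c.
  by rewrite -sq_mab mulnA -def_m -mulnA; congr (_ * _); rewrite /c; lia.
by rewrite -modnMm m1_mod4 mul_add2_mod4.
Qed.
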